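(* In the setting described in the context, $\varphi(B^1_k)=B^2_k$ for every $k\in\mathbb{N}$.
   Context: $\mathbb{D}^2$ is the open unit disk with the Poincaré metric $d$. For $j=1,2$, $\Gamma_j$ is a cocompact torsion-free Fuchsian group, $M_j=\mathbb{D}^2/\Gamma_j$ with quotient map $\pi_j$, and $M_1,M_2$ are homeomorphic. $\Lambda_j=\{\gamma(0):\gamma\in\Gamma_j\}$. Identifying $T_{\pi_j(0)}M_j$ with $\mathbb{D}^2$ via the exponential map (so $v\leftrightarrow z$ with $|v|=d(0,z)$, $\exp(v)=\pi_j(z)$), the focal decomposition is $\sigma^j_i=\{z : \#\{\lambda\in\Lambda_j : d(\lambda,z)=d(0,z)\}=i\}$, and the Brillouin sets are $B^j_k=\{z : \#\{\lambda\in\Lambda_j : d(\lambda,z)\le d(0,z)\}=k\}$ (equivalently, the set of $z$ with exactly $k$ points $z'$ of $\pi_j^{-1}(\pi_j(z))$ satisfying $d(0,z')\le d(0,z)$). $\varphi:\mathbb{D}^2\to\mathbb{D}^2$ is a homeomorphism with $\varphi(0)=0$ and $\varphi(\sigma^1_i)=\sigma^2_i$ for every $i\ge1$. *)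

From Stdlib Require Import Reals List.
From Coquelicot Require Import Coquelicot.
Open Scope R_scope.

Definition disk (z : C) : Prop := Cmod z < 1.

(** Poincare (hyperbolic) distance on the unit disk:
    d(z,w) = arcosh (1 + 2|z-w|^2 / ((1-|z|^2)(1-|w|^2))),
    with arcosh x = ln (x + sqrt (x^2 - 1)). *)
Definition hdist (z w : C) : R :=
  let x := 1 + 2 * (Cmod (Cminus z w)) ^ 2
                 / ((1 - (Cmod z) ^ 2) * (1 - (Cmod w) ^ 2)) in
  ln (x + sqrt (x * x - 1)).

Definition agree_on_disk (f g : C -> C) : Prop :=
  forall z, disk z -> f z = g z.

(** [(a,b)] represents the orientation preserving isometry
    z |-> (a z + b)/(conj b z + conj a), |a|^2 - |b|^2 = 1  (an element of SU(1,1)). *)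
Definition represents (a b : C) (g : C -> C) : Prop :=
  (Cmod a) ^ 2 - (Cmod b) ^ 2 = 1 /\
  forall z, disk z ->
    g z = Cdiv (Cplus (Cmult a z) b) (Cplus (Cmult (Cconj b) z) (Cconj a)).

Definition disk_aut (g : C -> C) : Prop := exists a b, represents a b g.

Definition aut_subgroup (G : (C -> C) -> Prop) : Prop :=
  (forall g, G g -> disk_aut g) /\
  (exists e, G e /\ agree_on_disk e (fun z => z)) /\
  (forall g h, G g -> G h -> exists k, G k /\ agree_on_disk k (fun z => g (h z))) /\
  (forall g, G g -> exists h, G h /\ agree_on_disk (fun z => h (g z)) (fun z => z)
                              /\ agree_on_disk (fun z => g (h z)) (fun z => z)).

(** Discreteness in PSU(1,1): the identity is isolated, i.e. some neighbourhood
    of the identity matrix in SU(1,1) contains (representatives of) no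
    nontrivial element of G. *)
Definition discrete_group (G : (C -> C) -> Prop) : Prop :=
  exists eps, 0 < eps /\
    forall g a b, G g -> represents a b g ->
      Cmod (Cminus a (RtoC 1)) < eps -> Cmod b < eps ->
      agree_on_disk g (fun z => z).

Definition fuchsian (G : (C -> C) -> Prop) : Prop :=
  aut_subgroup G /\ discrete_group G.

Definition torsion_free (G : (C -> C) -> Prop) : Prop :=
  forall g (n : nat), G g -> (1 <= n)%nat ->
    agree_on_disk (fun z => Nat.iter n g z) (fun z => z) ->
    agree_on_disk g (fun z => z).

Definition orb (G : (C -> C) -> Prop) (z w : C) : Prop :=
  exists g, G g /\ w = g z.

Definition invariant (G : (C -> C) -> Prop) (V : C -> Prop) : Prop :=
  forall z w, disk z -> orb G z w -> V z -> V w.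

(** Open subset of the disk (Euclidean topology = hyperbolic topology). *)
Definition open_in_disk (V : C -> Prop) : Prop :=
  forall z, V z -> disk z /\
    exists r, 0 < r /\ forall w, disk w -> Cmod (Cminus w z) < r -> V w.

(** Open sets of the quotient D/G correspond (via preimage under pi) exactly to
    G-invariant open subsets of D. Cocompactness = compactness of D/G,
    unfolded: every cover of D by G-invariant open sets has a finite subcover. *)
Definition cocompact (G : (C -> C) -> Prop) : Prop :=
  forall (I : Type) (U : I -> C -> Prop),
    (forall i, open_in_disk (U i) /\ invariant G (U i)) ->
    (forall z, disk z -> exists i, U i z) ->
    exists l : list I, forall z, disk z -> exists i, In i l /\ U i z.

Definition cocompact_torsion_free_fuchsian (G : (C -> C) -> Prop) : Prop :=
  fuchsian G /\ torsion_free G /\ cocompact G.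

(** [g] is a lift of a continuous map D/G1 -> D/G2. Every map D/G1 -> D/G2
    has such a lift; continuity w.r.t. the quotient topologies is exactly
    the condition that preimages of G2-invariant open sets are open. *)
Definition quot_cont_lift (G1 G2 : (C -> C) -> Prop) (g : C -> C) : Prop :=
  (forall z, disk z -> disk (g z)) /\
  (forall z w, disk z -> orb G1 z w -> orb G2 (g z) (g w)) /\
  (forall V, open_in_disk V -> invariant G2 V ->
     open_in_disk (fun z => disk z /\ V (g z))).

Definition quotients_homeomorphic (G1 G2 : (C -> C) -> Prop) : Prop :=
  exists g h,
    quot_cont_lift G1 G2 g /\ quot_cont_lift G2 G1 h /\
    (forall z, disk z -> orb G1 (h (g z)) z) /\
    (forall w, disk w -> orb G2 (g (h w)) w).

Definition Lambda (G : (C -> C) -> Prop) (x : C) : Prop :=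
  exists g, G g /\ x = g (RtoC 0).

Definition card_is (P : C -> Prop) (k : nat) : Prop :=
  exists l : list C, NoDup l /\ length l = k /\ forall x, In x l <-> P x.

Definition focal (G : (C -> C) -> Prop) (i : nat) (z : C) : Prop :=
  disk z /\ card_is (fun x => Lambda G x /\ hdist x z = hdist (RtoC 0) z) i.

Definition brillouin (G : (C -> C) -> Prop) (k : nat) (z : C) : Prop :=
  disk z /\ card_is (fun x => Lambda G x /\ hdist x z <= hdist (RtoC 0) z) k.

Definition cont_on_disk (f : C -> C) : Prop :=
  forall z, disk z -> forall eps, 0 < eps -> exists del, 0 < del /\
    forall w, disk w -> Cmod (Cminus w z) < del -> Cmod (Cminus (f w) (f z)) < eps.

Definition disk_homeo (f : C -> C) : Prop :=
  (forall z, disk z -> disk (f z)) /\ cont_on_disk f /\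
  exists g, (forall z, disk z -> disk (g z)) /\ cont_on_disk g /\
    (forall z, disk z -> g (f z) = z) /\ (forall z, disk z -> f (g z) = z).

Definition image_eq (f : C -> C) (A B : C -> Prop) : Prop :=
  forall w, B w <-> exists z, A z /\ f z = w.

From Stdlib Require Import Reals List Lra Psatz Classical ClassicalEpsilon.
From Coquelicot Require Import Coquelicot.
Open Scope R_scope.

(* For [l <> 0], a point [p] of the disk satisfies [d(l,p) <= d(0,p)] iff
   [|l - p|^2 <= (1 - |l|^2) |p|^2].  Along a segment [s |-> s z], [s] in [[0,1]], this
   quadratic condition changes sign at most once, and a lattice point equidistant with [0]
   from some [s z] is at least as close as [0] to [z].  Given [z] in [B^1_k] and a lattice
   point [mu <> 0] at least as close as [0] to [phi z], the path [phi (s z)] crosses the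
   bisector of [0] and [mu]; since [phi] preserves focal indices, [mu] can be matched with a
   lattice point [l <> 0] equidistant with [0] from [s z], hence in the Brillouin ball of [z],
   and distinct [mu] get distinct [l].  So [#ball(phi z) <= k], and applying this to
   [phi^-1] gives equality. *)

Definition injects_into {A B : Type} (S : A -> Prop) (T : B -> Prop) (g : A -> B) : Prop :=
  (forall x, S x -> T (g x)) /\ (forall x y, S x -> S y -> g x = g y -> x = y).

Lemma list_of_injects_into {A B : Type} (lB : list B) (S : A -> Prop) (g : A -> B) :
  injects_into S (fun y => In y lB) g ->
  exists l, NoDup l /\ (length l <= length lB)%nat /\ (forall x, In x l <-> S x).
Proof.
  revert S; induction lB as [|y lB IH]; intros S [Hin Hinj].
  - exists nil; repeat split; [constructor | simpl; lia | intros [] |].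
    intros Hx; exact (Hin x Hx).
  - destruct (classic (exists x0, S x0 /\ g x0 = y)) as [[x0 [Hx0 Hgx0]] | Hno].
    + destruct (IH (fun x => S x /\ x <> x0)) as [l [Hnd [Hlen Hl]]].
      { split.
        - intros x [Hx Hne]; destruct (Hin x Hx) as [E | E]; auto.
          exfalso; apply Hne, Hinj; congruence.
        - intros x x' [Hx _] [Hx' _]; apply Hinj; auto. }
      exists (x0 :: l); repeat split.
      * constructor; auto; intros Hi; apply Hl in Hi; tauto.
      * simpl; lia.
      * intros [E | E]; [subst; auto | apply Hl in E; tauto].
      * intros Hx; destruct (classic (x = x0)) as [E | E]; [left | right; apply Hl]; auto.
    + destruct (IH S) as [l [Hnd [Hlen Hl]]].
      { split; auto. intros x Hx; destruct (Hin x Hx) as [E | E]; auto.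
        exfalso; apply Hno; eauto. }
      exists l; repeat split; auto; [simpl; lia | apply Hl | apply Hl].
Qed.

Lemma injects_into_longer {A : Type} (lA lB : list A) :
  NoDup lB -> (length lA <= length lB)%nat ->
  exists g, injects_into (fun x => In x lA) (fun y => In y lB) g.
Proof.
  revert lB; induction lA as [|a lA IH]; intros lB Hnd Hlen.
  - exists (fun x => x); split; intros x; simpl; tauto.
  - destruct lB as [|b lB]; simpl in Hlen; [lia |].
    inversion Hnd as [|? ? Hb HndB]; subst.
    destruct (IH lB HndB ltac:(lia)) as [g [Hg Hginj]].
    exists (fun x => if excluded_middle_informative (x = a) then b else g x).
    assert (Hrest : forall x, In x (a :: lA) -> x <> a -> In x lA)
      by (intros x [E | E] Hne; congruence).
    split.
    + intros x Hx; destruct (excluded_middle_informative (x = a)); simpl; auto.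
    + intros x y Hx Hy.
      destruct (excluded_middle_informative (x = a)) as [Ex | Ex];
      destruct (excluded_middle_informative (y = a)) as [Ey | Ey]; intros E.
      * congruence.
      * exfalso; apply Hb; rewrite E; auto.
      * exfalso; apply Hb; rewrite <- E; auto.
      * apply Hginj; auto.
Qed.

Lemma card_is_unique (S : C -> Prop) n m : card_is S n -> card_is S m -> n = m.
Proof.
  intros [l1 [N1 [L1 H1]]] [l2 [N2 [L2 H2]]].
  pose proof (NoDup_incl_length N1 (fun x H => proj2 (H2 x) (proj1 (H1 x) H))).
  pose proof (NoDup_incl_length N2 (fun x H => proj2 (H1 x) (proj1 (H2 x) H))).
  lia.
Qed.

Lemma card_is_0_empty (S : C -> Prop) x : card_is S 0 -> ~ S x.
Proof.
  intros [[|y l] [_ [Hl HS]]] Hx; [apply HS in Hx; destruct Hx | discriminate].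
Qed.

Lemma card_is_remove (S : C -> Prop) n a :
  card_is S n -> S a -> card_is (fun x => S x /\ x <> a) (n - 1).
Proof.
  intros [l [Hnd [Hlen Hl]]] Ha; apply Hl in Ha.
  destruct (in_split a l Ha) as [l1 [l2 ->]].
  pose proof (NoDup_remove_2 _ _ _ Hnd) as Hna.
  exists (l1 ++ l2); repeat split.
  - eapply NoDup_remove_1; eauto.
  - rewrite length_app in *; simpl in Hlen; lia.
  - apply Hl; rewrite in_app_iff in *; simpl; tauto.
  - intros ->; auto.
  - intros [Hx Hne]; apply Hl in Hx; rewrite in_app_iff in *; simpl in Hx.
    destruct Hx as [H | [H | H]]; auto; congruence.
Qed.

Lemma card_le_of_injects_into (S T : C -> Prop) (g : C -> C) k :
  card_is T k -> injects_into S T g -> exists n, (n <= k)%nat /\ card_is S n.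
Proof.
  intros [lT [_ [<- HT]]] [Hg Hginj].
  destruct (list_of_injects_into lT S g) as [l [Hnd [Hlen Hl]]].
  { split; auto; intros x Hx; apply HT; auto. }
  exists (length l); split; auto; exists l; auto.
Qed.

Lemma injects_into_of_card_le (S T : C -> Prop) n m :
  card_is S n -> card_is T m -> (n <= m)%nat -> exists g, injects_into S T g.
Proof.
  intros [lS [_ [<- HS]]] [lT [HndT [<- HT]]] Hnm.
  destruct (injects_into_longer lS lT HndT Hnm) as [g [Hg Hginj]].
  exists g; split.
  - intros x Hx; apply HT, Hg, HS; auto.
  - intros x y Hx Hy; apply Hginj; apply HS; auto.
Qed.
Definition sqnorm (z : C) : R := fst z ^ 2 + snd z ^ 2.

(* Its zero set in the disk is the hyperbolic bisector of [0] and [l]. *)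
Definition bisector_form (l p : C) : R :=
  (fst l - fst p) ^ 2 + (snd l - snd p) ^ 2 - (1 - sqnorm l) * sqnorm p.

Definition cosh_hdist (z w : C) : R :=
  1 + 2 * (Cmod (Cminus z w)) ^ 2 / ((1 - (Cmod z) ^ 2) * (1 - (Cmod w) ^ 2)).

Definition arcosh (x : R) : R := ln (x + sqrt (x * x - 1)).

Lemma hdist_arcosh z w : hdist z w = arcosh (cosh_hdist z w).
Proof. reflexivity. Qed.

Lemma Cmod_sqr_sqnorm z : Cmod z ^ 2 = sqnorm z.
Proof. unfold Cmod, sqnorm; rewrite pow2_sqrt; nra. Qed.

Lemma sqnorm_ge0 z : 0 <= sqnorm z.
Proof. unfold sqnorm; nra. Qed.

Lemma sqnorm_gt0 z : z <> RtoC 0 -> 0 < sqnorm z.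
Proof.
  destruct z as [a b]; unfold sqnorm; cbn [fst snd]; intros Hz.
  destruct (Req_dec a 0); destruct (Req_dec b 0); subst; [easy | nra ..].
Qed.

Lemma disk_sqnorm z : disk z <-> sqnorm z < 1.
Proof.
  unfold disk; rewrite <- Cmod_sqr_sqnorm; pose proof (Cmod_ge_0 z); split; nra.
Qed.

Lemma disk_0 : disk (RtoC 0).
Proof. apply disk_sqnorm; unfold sqnorm; simpl; lra. Qed.

Lemma arcosh_lt x y : 1 <= x -> x < y -> arcosh x < arcosh y.
Proof.
  intros Hx Hxy; unfold arcosh; apply ln_increasing.
  - pose proof (sqrt_pos (x * x - 1)); lra.
  - assert (sqrt (x * x - 1) <= sqrt (y * y - 1)) by (apply sqrt_le_1_alt; nra); lra.
Qed.

Lemma arcosh_le_iff x y : 1 <= x -> 1 <= y -> (arcosh x <= arcosh y <-> x <= y).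
Proof.
  intros Hx Hy; split; intros H.
  - destruct (Rle_lt_dec x y); auto; pose proof (arcosh_lt y x); lra.
  - destruct H as [H | ->]; [left; apply arcosh_lt | right]; auto.
Qed.

Lemma arcosh_eq_iff x y : 1 <= x -> 1 <= y -> (arcosh x = arcosh y <-> x = y).
Proof.
  intros Hx Hy; rewrite <- !Rle_le_eq, !arcosh_le_iff by assumption; reflexivity.
Qed.

Lemma cosh_hdist_ge1 z w : disk z -> disk w -> 1 <= cosh_hdist z w.
Proof.
  rewrite !disk_sqnorm; intros Hz Hw; unfold cosh_hdist; rewrite !Cmod_sqr_sqnorm.
  pose proof (sqnorm_ge0 (Cminus z w)).
  assert (0 < (1 - sqnorm z) * (1 - sqnorm w)) by nra.
  assert (0 <= 2 * sqnorm (Cminus z w) / ((1 - sqnorm z) * (1 - sqnorm w)))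
    by (apply Rdiv_le_0_compat; lra).
  lra.
Qed.

Lemma cosh_hdist_sub l p : disk l -> disk p ->
  exists c, 0 < c /\ cosh_hdist l p - cosh_hdist (RtoC 0) p = c * bisector_form l p.
Proof.
  rewrite !disk_sqnorm; intros Hl Hp.
  exists (2 / ((1 - sqnorm l) * (1 - sqnorm p))); split.
  - apply Rdiv_lt_0_compat; nra.
  - unfold cosh_hdist; rewrite !Cmod_sqr_sqnorm.
    unfold bisector_form, sqnorm in *; simpl; field; lra.
Qed.

Lemma hdist_le_iff l p : disk l -> disk p ->
  (hdist l p <= hdist (RtoC 0) p <-> bisector_form l p <= 0).
Proof.
  intros Hl Hp; rewrite !hdist_arcosh, arcosh_le_iff by auto using cosh_hdist_ge1, disk_0.
  destruct (cosh_hdist_sub l p Hl Hp) as [c [Hc E]]; split; nra.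
Qed.

Lemma hdist_eq_iff l p : disk l -> disk p ->
  (hdist l p = hdist (RtoC 0) p <-> bisector_form l p = 0).
Proof.
  intros Hl Hp; rewrite !hdist_arcosh, arcosh_eq_iff by auto using cosh_hdist_ge1, disk_0.
  destruct (cosh_hdist_sub l p Hl Hp) as [c [Hc E]]; split; intros H.
  - rewrite H, Rminus_diag in E; symmetry in E.
    destruct (Rmult_integral _ _ E); [lra | auto].
  - rewrite H, Rmult_0_r in E; lra.
Qed.

Lemma bisector_form_0 l : bisector_form l (RtoC 0) = sqnorm l.
Proof. unfold bisector_form, sqnorm; simpl; ring. Qed.

Definition ray (z : C) (s : R) : C := (s * fst z, s * snd z).

Lemma ray_0 z : ray z 0 = RtoC 0.
Proof. unfold ray, RtoC; f_equal; ring. Qed.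

Lemma ray_1 z : ray z 1 = z.
Proof. destruct z; unfold ray; simpl; f_equal; ring. Qed.

Lemma sqnorm_ray z s : sqnorm (ray z s) = s ^ 2 * sqnorm z.
Proof. unfold sqnorm, ray; simpl; ring. Qed.

Lemma disk_ray z s : disk z -> 0 <= s <= 1 -> disk (ray z s).
Proof.
  rewrite !disk_sqnorm, sqnorm_ray; intros Hz Hs; pose proof (sqnorm_ge0 z).
  assert (s ^ 2 <= 1) by nra; nra.
Qed.

Lemma Cmod_ray_sub z s t : Cmod (Cminus (ray z s) (ray z t)) = Rabs (s - t) * Cmod z.
Proof.
  rewrite <- Cmod_R, <- Cmod_mult; f_equal.
  destruct z; unfold ray, Cminus, Cplus, Copp, Cmult, RtoC; simpl; f_equal; ring.
Qed.

Lemma bisector_form_ray l z s :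
  s * bisector_form l z - bisector_form l (ray z s)
  = sqnorm l * (s - 1) * (1 - s * sqnorm z).
Proof. unfold bisector_form, sqnorm, ray; simpl; ring. Qed.

Lemma bisector_ray_closer l z s : disk z -> l <> RtoC 0 -> 0 <= s <= 1 ->
  bisector_form l (ray z s) = 0 -> bisector_form l z <= 0.
Proof.
  rewrite disk_sqnorm; intros Hz Hl Hs Hq.
  pose proof (bisector_form_ray l z s) as E; rewrite Hq, Rminus_0_r in E.
  pose proof (sqnorm_gt0 l Hl); pose proof (sqnorm_ge0 z).
  assert (Hs0 : s <> 0) by (intros ->; rewrite ray_0, bisector_form_0 in Hq; lra).
  assert (s * bisector_form l z <= 0).
  { rewrite E; apply Rmult_le_0_r; [apply Rmult_le_0_l|]; nra. }
  nra.
Qed.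

(* Along [s |-> s z] the form is the quadratic [L - 2 c s + L Z s^2], with [L = |l|^2],
   [Z = |z|^2], [c = <l,z>]; two roots in [0,1] would have product [1/Z > 1]. *)
Lemma bisector_ray_unique l z s1 s2 : disk z -> l <> RtoC 0 ->
  0 <= s1 <= 1 -> 0 <= s2 <= 1 ->
  bisector_form l (ray z s1) = 0 -> bisector_form l (ray z s2) = 0 -> s1 = s2.
Proof.
  rewrite disk_sqnorm; intros Hz Hl H1 H2 Q1 Q2.
  pose proof (sqnorm_gt0 l Hl); pose proof (sqnorm_ge0 z).
  set (c := fst l * fst z + snd l * snd z).
  assert (F : forall s, bisector_form l (ray z s)
            = sqnorm l - 2 * c * s + s ^ 2 * sqnorm z * sqnorm l)
    by (intros s; unfold bisector_form, sqnorm, ray, c; simpl; ring).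
  rewrite F in Q1, Q2.
  destruct (Req_dec s1 s2) as [|Hne]; auto; exfalso.
  assert (Hsum : -2 * c + (s1 + s2) * sqnorm z * sqnorm l = 0).
  { apply Rmult_eq_reg_l with (s1 - s2); [|lra]. rewrite Rmult_0_r. nra. }
  assert (E : sqnorm l * (1 - s1 * s2 * sqnorm z) = 0) by nra.
  assert (0 <= s1 * s2 <= 1) by (split; nra).
  assert (0 < 1 - s1 * s2 * sqnorm z) by nra.
  destruct (Rmult_integral _ _ E); lra.
Qed.

Lemma Lambda_0 G : aut_subgroup G -> Lambda G (RtoC 0).
Proof.
  intros [_ [[e [He Hid]] _]]; exists e; split; auto; rewrite Hid; auto using disk_0.
Qed.

Lemma Lambda_disk G x : aut_subgroup G -> Lambda G x -> disk x.
Proof.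
  intros [Haut _] [g [Hg ->]]; destruct (Haut g Hg) as [a [b [Hab Hrep]]].
  rewrite Hrep by apply disk_0; rewrite !Cmult_0_r, !Cplus_0_l.
  pose proof (Cmod_ge_0 a); pose proof (Cmod_ge_0 b).
  assert (Ha : 0 < Cmod a) by nra.
  assert (Hc : Cconj a <> RtoC 0) by (apply Cmod_gt_0; rewrite Cmod_conj; auto).
  unfold disk; rewrite Cmod_div, Cmod_conj by auto.
  apply Rlt_div_l; nra.
Qed.

Definition clamp01 (t : R) : R := Rmax 0 (Rmin 1 t).

Lemma clamp01_range t : 0 <= clamp01 t <= 1.
Proof. unfold clamp01, Rmax, Rmin; repeat destruct Rle_dec; lra. Qed.

Lemma clamp01_id t : 0 <= t <= 1 -> clamp01 t = t.
Proof. intros; unfold clamp01, Rmax, Rmin; repeat destruct Rle_dec; lra. Qed.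

Lemma clamp01_lipschitz t s : Rabs (clamp01 t - clamp01 s) <= Rabs (t - s).
Proof. unfold clamp01, Rmax, Rmin; repeat destruct Rle_dec; split_Rabs; lra. Qed.

Lemma continuity_pt_bisector_form mu (u : R -> C) t0 :
  continuity_pt (fun t => fst (u t)) t0 -> continuity_pt (fun t => snd (u t)) t0 ->
  continuity_pt (fun t => bisector_form mu (u t)) t0.
Proof.
  set (X := fun t => fst (u t)); set (Y := fun t => snd (u t)); intros HX HY.
  apply continuity_pt_ext with
    ((fct_cte (fst mu) - X) * (fct_cte (fst mu) - X)
     + (fct_cte (snd mu) - Y) * (fct_cte (snd mu) - Y)
     - fct_cte (1 - sqnorm mu) * (X * X + Y * Y))%F.
  - intros t; unfold bisector_form, sqnorm, X, Y, fct_cte, minus_fct, plus_fct, mult_fct.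
    ring.
  - repeat first [apply continuity_pt_minus | apply continuity_pt_plus
                 | apply continuity_pt_mult | assumption
                 | apply continuity_pt_const; now intros ? ?].
Qed.

Section ImagePath.

Variable f : C -> C.
Hypothesis f_cont : cont_on_disk f.
Variable z : C.
Hypothesis z_disk : disk z.

(* [clamp01] extends the path [s |-> f (s z)], [s] in [[0,1]], to a continuous map on [R]. *)
Lemma continuity_pt_image_path_coord (pr : C -> R) :
  (forall w, Rabs (pr w) <= Cmod w) -> (forall a b, pr (Cminus a b) = pr a - pr b) ->
  forall t0, continuity_pt (fun t => pr (f (ray z (clamp01 t)))) t0.
Proof.
  intros Hpr Hlin t0 eps Heps; cbn [dist R_met]; unfold R_dist.
  destruct (f_cont _ (disk_ray z _ z_disk (clamp01_range t0)) eps Heps) as [del [Hdel Hd]].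
  exists del; split; auto; intros t [_ Ht].
  rewrite <- Hlin; eapply Rle_lt_trans; [apply Hpr |].
  apply Hd; [apply disk_ray; auto using clamp01_range |].
  rewrite Cmod_ray_sub.
  pose proof (clamp01_lipschitz t t0); pose proof (Rabs_pos (clamp01 t - clamp01 t0)).
  pose proof (Cmod_ge_0 z); unfold disk in z_disk; nra.
Qed.

Lemma image_path_meets_bisector mu :
  bisector_form mu (f (RtoC 0)) * bisector_form mu (f z) <= 0 ->
  exists s, 0 <= s <= 1 /\ bisector_form mu (f (ray z s)) = 0.
Proof.
  intros Hsign.
  assert (Hcont : continuity (fun t => bisector_form mu (f (ray z (clamp01 t))))).
  { assert (forall w, Rabs (fst w) <= Cmod w)
      by (intros w; eapply Rle_trans, Rmax_Cmod; apply Rmax_l).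
    assert (forall w, Rabs (snd w) <= Cmod w)
      by (intros w; eapply Rle_trans, Rmax_Cmod; apply Rmax_r).
    intros t0; apply continuity_pt_bisector_form;
      apply continuity_pt_image_path_coord; auto. }
  destruct (IVT_cor _ 0 1 Hcont) as [s [Hs Hq]]; [lra | |].
  - rewrite !clamp01_id, ray_0, ray_1 by lra; auto.
  - exists s; rewrite clamp01_id in Hq; auto.
Qed.

End ImagePath.

Definition equidistant (G : (C -> C) -> Prop) (p x : C) : Prop :=
  Lambda G x /\ hdist x p = hdist (RtoC 0) p.

Definition brillouin_ball (G : (C -> C) -> Prop) (p x : C) : Prop :=
  Lambda G x /\ hdist x p <= hdist (RtoC 0) p.

Definition punctured (S : C -> Prop) (x : C) : Prop := S x /\ x <> RtoC 0.

Definition preserves_focal (Ga Gb : (C -> C) -> Prop) (f : C -> C) : Prop :=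
  (forall z, disk z -> disk (f z)) /\ cont_on_disk f /\ f (RtoC 0) = RtoC 0 /\
  forall i x, (1 <= i)%nat -> focal Ga i x -> focal Gb i (f x).

Section BrillouinTransport.

Variables Ga Gb : (C -> C) -> Prop.
Hypothesis Ga_aut : aut_subgroup Ga.
Hypothesis Gb_aut : aut_subgroup Gb.
Variable f : C -> C.
Hypothesis f_focal : preserves_focal Ga Gb f.
Variable z : C.
Hypothesis z_disk : disk z.
Variable k : nat.
Hypothesis z_ball_card : card_is (brillouin_ball Ga z) k.

Lemma equidistant_ray_in_ball s x :
  0 <= s <= 1 -> equidistant Ga (ray z s) x -> brillouin_ball Ga z x.
Proof.
  intros Hs [HL Heq]; split; auto.
  destruct (classic (x = RtoC 0)) as [-> | Hx0]; [lra |].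
  assert (Hx : disk x) by (apply (Lambda_disk Ga); auto).
  apply hdist_le_iff; auto; apply hdist_eq_iff in Heq; auto using disk_ray.
  eapply bisector_ray_closer; eauto.
Qed.

(* Both counts equal the common focal index of [s z] and [f (s z)]; removing [0] keeps them equal. *)
Lemma punctured_equidistant_matching s : 0 <= s <= 1 ->
  exists g, injects_into (punctured (equidistant Gb (f (ray z s))))
                         (punctured (equidistant Ga (ray z s))) g.
Proof.
  intros Hs; destruct f_focal as [_ [_ [_ Hfoc]]].
  destruct (card_le_of_injects_into (equidistant Ga (ray z s)) (brillouin_ball Ga z)
              (fun x => x) k z_ball_card) as [i [_ Hi]].
  { split; auto; intros x; apply (equidistant_ray_in_ball s); auto. }
  assert (Q0a : equidistant Ga (ray z s) (RtoC 0)) by (split; auto using Lambda_0).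
  assert (Hi1 : (1 <= i)%nat).
  { destruct i; [exfalso; eapply card_is_0_empty; eauto | lia]. }
  destruct (Hfoc i (ray z s) Hi1 (conj (disk_ray z s z_disk Hs) Hi)) as [_ Hib].
  assert (Q0b : equidistant Gb (f (ray z s)) (RtoC 0)) by (split; auto using Lambda_0).
  apply (injects_into_of_card_le _ _ (i - 1) (i - 1)); [..| lia]; apply card_is_remove; auto.
Qed.

Lemma punctured_ball_on_image_path mu : punctured (brillouin_ball Gb (f z)) mu ->
  exists s, 0 <= s <= 1 /\ equidistant Gb (f (ray z s)) mu.
Proof.
  intros [[HL Hle] Hmu0]; destruct f_focal as [f_disk [f_cont [f_0 _]]].
  assert (Hmu : disk mu) by (apply (Lambda_disk Gb); auto).
  destruct (image_path_meets_bisector f f_cont z z_disk mu) as [s [Hs Hq]].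
  { rewrite f_0, bisector_form_0; apply hdist_le_iff in Hle; auto.
    pose proof (sqnorm_gt0 mu Hmu0); nra. }
  exists s; split; [| split]; auto; apply hdist_eq_iff; auto using disk_ray.
Qed.

Definition crossing_time (mu : C) : R :=
  epsilon (inhabits 0) (fun s => 0 <= s <= 1 /\ equidistant Gb (f (ray z s)) mu).

Definition equidistant_matching (s : R) : C -> C :=
  epsilon (inhabits (fun x => x))
    (injects_into (punctured (equidistant Gb (f (ray z s))))
                  (punctured (equidistant Ga (ray z s)))).

Definition ball_matching (mu : C) : C :=
  if excluded_middle_informative (mu = RtoC 0) then RtoC 0
  else equidistant_matching (crossing_time mu) mu.

Lemma crossing_time_spec mu : punctured (brillouin_ball Gb (f z)) mu ->
  0 <= crossing_time mu <= 1 /\ equidistant Gb (f (ray z (crossing_time mu))) mu.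
Proof. intros H; exact (epsilon_spec _ _ (punctured_ball_on_image_path mu H)). Qed.

Lemma equidistant_matching_spec s : 0 <= s <= 1 ->
  injects_into (punctured (equidistant Gb (f (ray z s))))
               (punctured (equidistant Ga (ray z s))) (equidistant_matching s).
Proof. intros Hs; exact (epsilon_spec _ _ (punctured_equidistant_matching s Hs)). Qed.

Lemma ball_matching_punctured mu : punctured (brillouin_ball Gb (f z)) mu ->
  ball_matching mu = equidistant_matching (crossing_time mu) mu /\
  punctured (equidistant Ga (ray z (crossing_time mu))) (ball_matching mu).
Proof.
  intros Hmu; destruct (crossing_time_spec mu Hmu) as [Hs Hq].
  assert (E : ball_matching mu = equidistant_matching (crossing_time mu) mu).
  { unfold ball_matching; destruct excluded_middle_informative; [destruct Hmu |]; easy. }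
  split; auto; rewrite E; apply (equidistant_matching_spec _ Hs).
  split; auto; apply Hmu.
Qed.

Lemma ball_matching_injects :
  injects_into (brillouin_ball Gb (f z)) (brillouin_ball Ga z) ball_matching.
Proof.
  assert (Hnz : forall mu, brillouin_ball Gb (f z) mu -> mu <> RtoC 0 ->
            punctured (brillouin_ball Gb (f z)) mu) by (split; auto).
  assert (Hz0 : ball_matching (RtoC 0) = RtoC 0).
  { unfold ball_matching; destruct excluded_middle_informative; easy. }
  split.
  - intros mu Hmu; destruct (classic (mu = RtoC 0)) as [-> | Hmu0].
    + rewrite Hz0; split; auto using Lambda_0, Rle_refl.
    + destruct (crossing_time_spec mu (Hnz mu Hmu Hmu0)) as [Hs _].
      destruct (ball_matching_punctured mu (Hnz mu Hmu Hmu0)) as [_ [Hq _]].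
      eapply equidistant_ray_in_ball; eauto.
  - intros mu nu Hmu Hnu E.
    destruct (classic (mu = RtoC 0)) as [-> | Hmu0];
    destruct (classic (nu = RtoC 0)) as [-> | Hnu0]; auto.
    + destruct (ball_matching_punctured nu (Hnz nu Hnu Hnu0)) as [_ [_ Hne]]; congruence.
    + destruct (ball_matching_punctured mu (Hnz mu Hmu Hmu0)) as [_ [_ Hne]]; congruence.
    + specialize (Hnz mu Hmu Hmu0) as Pmu; specialize (Hnz nu Hnu Hnu0) as Pnu.
      destruct (crossing_time_spec mu Pmu) as [Hs Qmu].
      destruct (crossing_time_spec nu Pnu) as [Ht Qnu].
      destruct (ball_matching_punctured mu Pmu) as [Emu [[HL Hl] Hlam]].
      destruct (ball_matching_punctured nu Pnu) as [Enu [[_ Hl'] _]].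
      assert (Hdisk : disk (ball_matching mu)) by (apply (Lambda_disk Ga); auto).
      rewrite <- E in Hl'.
      rewrite hdist_eq_iff in Hl by auto using disk_ray.
      rewrite hdist_eq_iff in Hl' by auto using disk_ray.
      assert (Et : crossing_time mu = crossing_time nu)
        by (apply (bisector_ray_unique (ball_matching mu) z); auto).
      rewrite Emu, Enu, <- Et in E.
      apply (equidistant_matching_spec _ Hs); [split | rewrite Et; split |]; auto.
Qed.

End BrillouinTransport.

Lemma brillouin_image_card_le Ga Gb f k z :
  aut_subgroup Ga -> aut_subgroup Gb -> preserves_focal Ga Gb f ->
  brillouin Ga k z -> exists n, (n <= k)%nat /\ brillouin Gb n (f z).
Proof.
  intros HGa HGb Hf [Hz Hk].
  destruct (card_le_of_injects_into _ _ _ k Hk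
              (ball_matching_injects Ga Gb HGa HGb f Hf z Hz k Hk)) as [n [Hn Hc]].
  exists n; split; auto; split; auto; apply Hf, Hz.
Qed.

Lemma brillouin_image Ga Gb f g k z :
  aut_subgroup Ga -> aut_subgroup Gb ->
  preserves_focal Ga Gb f -> preserves_focal Gb Ga g ->
  (forall x, disk x -> g (f x) = x) ->
  brillouin Ga k z -> brillouin Gb k (f z).
Proof.
  intros HGa HGb Hf Hg Hgf Hz.
  destruct (brillouin_image_card_le Ga Gb f k z) as [n [Hn Hfz]]; auto.
  destruct (brillouin_image_card_le Gb Ga g n (f z)) as [m [Hm Hgfz]]; auto.
  rewrite Hgf in Hgfz by apply Hz.
  assert (m = k) by (eapply card_is_unique; [apply Hgfz | apply Hz]).
  replace k with n by lia; auto.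
Qed.

Theorem lemma6 (G1 G2 : (C -> C) -> Prop) (phi : C -> C) :
  cocompact_torsion_free_fuchsian G1 ->
  cocompact_torsion_free_fuchsian G2 ->
  quotients_homeomorphic G1 G2 ->
  disk_homeo phi ->
  phi (RtoC 0) = RtoC 0 ->
  (forall i : nat, (1 <= i)%nat -> image_eq phi (focal G1 i) (focal G2 i)) ->
  forall k : nat, image_eq phi (brillouin G1 k) (brillouin G2 k).
Proof.
  intros [[HG1 _] _] [[HG2 _] _] _
    [phi_disk [phi_cont [psi [psi_disk [psi_cont [psi_phi phi_psi]]]]]] phi_0 Hfocal k.
  assert (psi_0 : psi (RtoC 0) = RtoC 0) by (rewrite <- phi_0 at 1; apply psi_phi, disk_0).
  assert (Hphi : preserves_focal G1 G2 phi).
  { refine (conj phi_disk (conj phi_cont (conj phi_0 _))); intros i x Hi Hx; apply (Hfocal i Hi); eauto. }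
  assert (Hpsi : preserves_focal G2 G1 psi).
  { refine (conj psi_disk (conj psi_cont (conj psi_0 _))); intros i y Hi Hy; apply (Hfocal i Hi) in Hy.
    destruct Hy as [x [Hx <-]]; rewrite psi_phi; [apply Hx | apply Hx]. }
  intros w; split.
  - intros Hw; exists (psi w); split; [| apply phi_psi, Hw].
    apply (brillouin_image G2 G1 psi phi); auto.
  - intros [x [Hx <-]]; apply (brillouin_image G1 G2 phi psi); auto.
Qed.
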